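(* For every $i\ge1$, in $\mathcal W_m(q,\mu)$ with $m\ge 2i+1$: $$c^{(2i)}\,\sigma_{2i}\,c^{(2i)}=\eta^{-1}\mu^{-1}c^{(2i)},\qquad c^{(2i)}\,\kappa_{2i}\,c^{(2i)}=\eta^{-1}c^{(2i)}.$$
   Context: Fix $q\in\mathbb C\setminus\{0,\pm1\}$, $\mu\in\mathbb C\setminus\{0,q,-q^{-1}\}$. Braid group $\mathcal B_n$: generators $\sigma_1,\dots,\sigma_{n-1}$, relations $\sigma_i\sigma_{i+1}\sigma_i=\sigma_{i+1}\sigma_i\sigma_{i+1}$, $\sigma_i\sigma_j=\sigma_j\sigma_i$ ($|i-j|>1$). With $\kappa_i:=\frac{(q-\sigma_i)(q^{-1}+\sigma_i)}{\mu(q-q^{-1})}$, the BMW algebra $\mathcal W_n(q,\mu)$ is $\mathbb C\mathcal B_n$ modulo $\sigma_i\kappa_i=\kappa_i\sigma_i=\mu\kappa_i$, $\kappa_i\sigma_{i+1}^{\epsilon}\kappa_i=\mu^{-\epsilon}\kappa_i$ ($\epsilon=\pm1$). $\eta:=\frac{(q-\mu)(q^{-1}+\mu)}{\mu(q-q^{-1})}$. Elements of $\mathcal W_n$ are viewed in $\mathcal W_m$, $m>n$, via $\sigma_i\mapsto\sigma_i$; for $\alpha\in\mathcal W_n$, $\alpha^{\uparrow k}\in\mathcal W_{n+k}$ is its image under $\sigma_i\mapsto\sigma_{i+k}$. Contractors: $c^{(2)}:=\eta^{-1}\kappa_1$, $c^{(2i+2)}:=c^{(2i)\uparrow1}\kappa_1\kappa_{2i+1}c^{(2i)\uparrow1}$.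 *)

From HB Require Import structures.
From mathcomp Require Import all_boot all_order all_algebra.
Set Implicit Arguments. Unset Strict Implicit. Unset Printing Implicit Defensive.
Import GRing.Theory.
Local Open Scope ring_scope.

(* The BMW algebra W_m(q,mu) is the quotient of the group algebra of the
   braid group B_m by the BMW relations.  We work with its universal property:
   an identity holds in W_m iff it holds for every F-algebra A and every family
   s_1..s_{m-1} of invertible elements of A (inverses t_i) satisfying the braid
   and BMW relations.  Sequences are 1-indexed: s i = sigma_i. *)

Section BMW.
Variables (F : fieldType) (A : algType F) (q mu : F).

Definition kappa (s : nat -> A) (i : nat) : A :=
  (mu * (q - q^-1))^-1 *: ((q%:A - s i) * (q^-1%:A + s i)).

Definition bmw_eta : F := (q - mu) * (q^-1 + mu) / (mu * (q - q^-1)).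

Definition shift1 (s : nat -> A) : nat -> A := fun k => s k.+1.

(* contractor s j = c^{(2j)}, for j >= 1 (value at j = 0 is irrelevant). *)
Fixpoint contractor (s : nat -> A) (j : nat) {struct j} : A :=
  match j with
  | 0 => 1
  | 1 => bmw_eta^-1 *: kappa s 1
  | (j'.+1) as jj =>
      contractor (shift1 s) j' * kappa s 1 * kappa s (2 * j').+1
        * contractor (shift1 s) j'
  end.

Definition BMW_rels (m : nat) (s t : nat -> A) : Prop :=
  [/\ forall i, (1 <= i <= m.-1)%N -> s i * t i = 1 /\ t i * s i = 1,
      forall i, (1 <= i)%N -> (i.+1 <= m.-1)%N ->
        s i * s i.+1 * s i = s i.+1 * s i * s i.+1,
      forall i j, (1 <= i <= m.-1)%N -> (1 <= j <= m.-1)%N -> (i.+1 < j)%N ->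
        s i * s j = s j * s i,
      forall i, (1 <= i <= m.-1)%N ->
        s i * kappa s i = mu *: kappa s i /\ kappa s i * s i = mu *: kappa s i
    & forall i, (1 <= i)%N -> (i.+1 <= m.-1)%N ->
        kappa s i * s i.+1 * kappa s i = mu^-1 *: kappa s i /\
        kappa s i * t i.+1 * kappa s i = mu *: kappa s i].

End BMW.

(* Write K_i for kappa_i and C_n for c^{(2n)}, so that
   C_{n+1} = C_n^{up 1} K_1 K_{2n+1} C_n^{up 1}.  Both identities are instances
   of a sandwich rule: if Y commutes with sigma_1, ..., sigma_{2n} and
   K_{2n+1} Y K_{2n+1} = a K_{2n+1}, then C_{n+1} Y C_{n+1} = eta^-1 a C_{n+1}
   (take Y = sigma_{2n+2}, a = mu^-1, resp. Y = K_{2n+2}, a = 1).  The rule is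
   proved by induction on n, simultaneously with the idempotence of C_n, the
   absorption C_{n-1}^{up 1} C_n = C_n and the contraction
   K_1 C_n^{up 1} K_1 = eta^-1 K_1 C_{n-1}^{up 2}.  Far commutativity moves
   the outer K's and Y past the inner contractors; besides it, only the local
   relations K_i^2 = eta K_i, K_i sigma_{i+1} K_i = mu^-1 K_i and
   K_i K_{i+1} K_i = K_i are used, the last one coming from the skein relation
   sigma_i - sigma_i^-1 = (q - q^-1) (1 - K_i). *)

From HB Require Import structures.
From mathcomp Require Import all_boot all_order all_algebra.
From mathcomp Require Import ring zify.
Import GRing.Theory.
Local Open Scope ring_scope.

Section Sandwich.
Set Implicit Arguments. Unset Strict Implicit.
Variables (F : fieldType) (A : algType F).

Lemma commrZ (x y : A) (a : F) : GRing.comm x y -> GRing.comm x (a *: y).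
Proof. by move=> xy; rewrite /GRing.comm -scalerAr -scalerAl xy. Qed.

Lemma sandwich_step (C K D L Y : A) (a b : F) :
  C * C = C -> D * C = C -> K * C * K = b *: (K * D) ->
  GRing.comm K L -> GRing.comm D L -> GRing.comm C Y -> GRing.comm K Y ->
  L * Y * L = a *: L ->
  (C * K * L * C) * Y * (C * K * L * C) = (b * a) *: (C * K * L * C).
Proof.
move=> CC DC KCK KL DL CY KY LYL.
have CYC : C * Y * C = Y * C by rewrite CY -mulrA CC.
have -> : C * K * L * C * Y * (C * K * L * C) = C * (L * Y * (K * C * K) * L) * C.
  rewrite !mulrA -(mulrA _ C Y) -(mulrA _ (C * Y) C) CYC !mulrA.
  by rewrite -(mulrA C K L) KL mulrA -(mulrA _ K Y) KY !mulrA.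
rewrite KCK -scalerAr -scalerAl -scalerAr -scalerAl.
have -> : L * Y * (K * D) * L = K * (L * Y * L) * D.
  by rewrite !mulrA -(mulrA L Y K) -KY mulrA -KL -(mulrA _ D L) DL !mulrA.
rewrite LYL -scalerAr -scalerAl -scalerAr -scalerAl scalerA.
by rewrite !mulrA -(mulrA _ D C) DC.
Qed.

Lemma absorb_step (K E K' L : A) (b : F) :
  GRing.comm K E -> GRing.comm K L -> K * K' * K = K -> E * L * E = b *: E ->
  K * (E * K' * L * E) * K = b *: (K * E).
Proof.
move=> KE KL KK'K ELE.
have -> : K * (E * K' * L * E) * K = E * (K * K' * K) * L * E.
  rewrite !mulrA KE -(mulrA E K K') -!mulrA; congr (E * (K * (K' * _))).
  by rewrite -KE mulrA -KL -mulrA.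
by rewrite KK'K -KE -!mulrA (mulrA E L) ELE scalerAr.
Qed.

End Sandwich.

Section Contractors.
Set Implicit Arguments. Unset Strict Implicit.
Variables (F : fieldType) (A : algType F) (q mu : F).
Local Notation k := (kappa q mu).
Local Notation eta := (bmw_eta q mu).
Local Notation c := (contractor q mu).

Lemma kappa_sq (s : nat -> A) i :
  s i * k s i = mu *: k s i -> k s i * k s i = eta *: k s i.
Proof.
move=> sK.
have PK : (q%:A - s i) * (q^-1%:A + s i) * k s i = ((q - mu) * (q^-1 + mu)) *: k s i.
  rewrite -mulrA [(_ + s i) * _]mulrDl mulr_algl sK -scalerDl -scalerAr.
  by rewrite mulrBl mulr_algl sK -scalerBl scalerA mulrC.
by rewrite {1}/kappa -scalerAl PK scalerA mulrC.
Qed.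

Lemma comm_kappa (x : A) (s : nat -> A) i :
  GRing.comm x (s i) -> GRing.comm x (k s i).
Proof.
move=> xs; apply/commrZ/commrM; [apply: commrB | apply: commrD] => //.
all: exact/commr_sym/comm_alg.
Qed.

Lemma kappa_comm (x : A) (s : nat -> A) i :
  GRing.comm (s i) x -> GRing.comm (k s i) x.
Proof. by move=> sx; apply/commr_sym/comm_kappa/commr_sym. Qed.

Lemma contractorSS (s : nat -> A) n :
  c s n.+2 = c (shift1 s) n.+1 * k s 1 * k s (2 * n).+3 * c (shift1 s) n.+1.
Proof. by rewrite [LHS]/= mulnS. Qed.

Lemma comm_contractor (x : A) (s : nat -> A) n :
  (forall j, (0 < j < 2 * n)%N -> GRing.comm x (s j)) -> GRing.comm x (c s n).
Proof.
elim: n s => [|[|n] IH] s xs; first exact: commr1.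
  by apply/commrZ/comm_kappa/xs.
have xC : GRing.comm x (c (shift1 s) n.+1) by apply: IH => j hj; apply: xs; lia.
rewrite contractorSS; apply: commrM => //.
by apply: commrM; [apply: commrM => //|]; apply/comm_kappa/xs; lia.
Qed.

Record contraction_rels (s : nat -> A) (N : nat) : Prop := {
  kappa_sq_rel : forall i, (0 < i <= N)%N -> k s i * k s i = eta *: k s i;
  kappa_braid_rel : forall i, (0 < i < N)%N -> k s i * k s i.+1 * k s i = k s i;
  kappa_sigma_rel : forall i, (0 < i < N)%N ->
    k s i * s i.+1 * k s i = mu^-1 *: k s i;
  sigma_far_comm : forall i j, (0 < i)%N -> (i.+1 < j <= N)%N ->
    GRing.comm (s i) (s j) }.

Lemma contraction_rels_shift s N :
  contraction_rels s N -> contraction_rels (shift1 s) N.-1.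
Proof.
by case=> KK KKK KsK far; split=> [i|i|i|i j] *;
  [apply: KK | apply: KKK | apply: KsK | apply: far]; lia.
Qed.

Definition sandwich_rule (s : nat -> A) (n : nat) : Prop :=
  forall (Y : A) (a : F), (forall l, (0 < l <= 2 * n)%N -> GRing.comm (s l) Y) ->
    k s (2 * n).+1 * Y * k s (2 * n).+1 = a *: k s (2 * n).+1 ->
    c s n.+1 * Y * c s n.+1 = (eta^-1 * a) *: c s n.+1.

(* The sandwich rule at level n+1 needs the first three facts at level n, and
   the contraction at level n+1 needs the sandwich rule at level n for the
   doubly shifted generators, so all four are proved together. *)
Definition contractor_inv (s : nat -> A) (n : nat) : Prop :=
  [/\ c s n.+1 * c s n.+1 = c s n.+1,
      c (shift1 s) n * c s n.+1 = c s n.+1,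
      k s 1 * c (shift1 s) n.+1 * k s 1 = eta^-1 *: (k s 1 * c (shift1 (shift1 s)) n)
    & sandwich_rule s n].

Lemma sandwich_ruleS s N n : contraction_rels s N -> (2 * n.+2 <= N)%N ->
  contractor_inv s n -> contractor_inv (shift1 s) n -> sandwich_rule s n.+1.
Proof.
move=> rs hN [_ _ KCK _] [CC DC _ _] Y a.
rewrite mulnS add2n => sY LYL; rewrite contractorSS.
have far := sigma_far_comm rs.
apply: (sandwich_step (D := c (shift1 (shift1 s)) n)) => //.
- by apply/kappa_comm/comm_kappa/far; lia.
- apply/commr_sym/comm_contractor => j hj.
  by apply/kappa_comm/commr_sym/far; lia.
- apply/commr_sym/comm_contractor => j hj.
  by apply/commr_sym/sY; lia.
- exact/kappa_comm/sY.
Qed.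

Hypotheses (hq0 : q != 0) (hq1 : q != 1) (hqm1 : q != -1) (hmu0 : mu != 0).

Lemma q_sq_sub1_neq0 : q * q - 1 != 0.
Proof.
have -> : q * q - 1 = (q - 1) * (q + 1) by ring.
by rewrite mulf_neq0 // ?subr_eq0 ?addr_eq0.
Qed.

Lemma q_sub_qinv_neq0 : q - q^-1 != 0.
Proof.
have -> : q - q^-1 = (q * q - 1) / q by field.
by rewrite mulf_neq0 ?invr_neq0 ?q_sq_sub1_neq0.
Qed.

Lemma kappa_skein (s t : nat -> A) i : t i * s i = 1 ->
  s i * k s i = mu *: k s i -> (q - q^-1) *: k s i = (q - q^-1)%:A - s i + t i.
Proof.
move=> ts sK.
have tK : t i * k s i = mu^-1 *: k s i.
  apply: (scalerI hmu0); rewrite scalerA mulfV // scale1r.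
  by rewrite scalerAr -sK mulrA ts mul1r.
have tP : t i * ((q%:A - s i) * (q^-1%:A + s i)) = (q - q^-1)%:A - s i + t i.
  rewrite mulrA mulrBr mulr_algr ts mulrBl mul1r -scalerAl mulrDr mulr_algr ts.
  rewrite scalerDr scalerA mulfV // scale1r scalerBl opprD.
  by rewrite [RHS]addrC !addrA.
have -> : (q - q^-1) *: k s i = (mu * (q - q^-1)) *: (t i * k s i).
  by rewrite tK [RHS]scalerA mulrAC mulfV // mul1r.
by rewrite /kappa -scalerAr tP scalerA mulfV ?scale1r // mulf_neq0 ?q_sub_qinv_neq0.
Qed.

Lemma kappa_braid (s t : nat -> A) i : t i.+1 * s i.+1 = 1 ->
  s i * k s i = mu *: k s i -> s i.+1 * k s i.+1 = mu *: k s i.+1 ->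
  k s i * s i.+1 * k s i = mu^-1 *: k s i ->
  k s i * t i.+1 * k s i = mu *: k s i ->
  k s i * k s i.+1 * k s i = k s i.
Proof.
move=> ts sK sK' KsK KtK; apply: (scalerI q_sub_qinv_neq0).
rewrite scalerAl scalerAr (kappa_skein ts sK') mulrDr mulrBr mulrDl mulrBl.
rewrite mulr_algr KsK KtK -scalerAl (kappa_sq sK) !scalerA -scalerBl -scalerDl.
by congr (_ *: _); rewrite /bmw_eta; field; rewrite hq0 hmu0 q_sq_sub1_neq0.
Qed.

Lemma bmw_contraction_rels m (s t : nat -> A) :
  BMW_rels q mu m s t -> contraction_rels s m.-1.
Proof.
case=> inv _ far sK KsK; split.
- by move=> i hi; apply: kappa_sq; exact: (sK i hi).1.
- move=> i hi; have [KsK1 KtK1] := KsK i ltac:(lia) ltac:(lia).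
  exact: (kappa_braid (inv i.+1 ltac:(lia)).2 (sK i ltac:(lia)).1
                      (sK i.+1 ltac:(lia)).1 KsK1 KtK1).
- by move=> i hi; apply: (KsK i ltac:(lia) ltac:(lia)).1.
- by move=> i j hi hj; apply: far; lia.
Qed.

Hypotheses (hmuq : mu != q) (hmuq' : mu != - q^-1).

Lemma bmw_eta_neq0 : eta != 0.
Proof.
rewrite /bmw_eta !mulf_neq0 ?invr_neq0 ?mulf_neq0 ?q_sub_qinv_neq0 //.
  by rewrite subr_eq0 eq_sym.
by rewrite addrC addr_eq0.
Qed.

Lemma contractor_inv0 s N : contraction_rels s N -> (2 <= N)%N -> contractor_inv s 0.
Proof.
move=> rs hN.
have KK : k s 1 * k s 1 = eta *: k s 1 by apply: (kappa_sq_rel rs); lia.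
have KKK : k s 1 * k (shift1 s) 1 * k s 1 = k s 1.
  by apply: (kappa_braid_rel rs); lia.
rewrite /contractor_inv /sandwich_rule muln0 /=.
move: (k s 1) (k (shift1 s) 1) KK KKK => K K' KK KKK.
split=> [||| Y a _ KYK].
- by rewrite -scalerAl -scalerAr KK (scalerK bmw_eta_neq0).
- by rewrite mul1r.
- by rewrite -scalerAr -scalerAl KKK mulr1.
- by rewrite -scalerAr -!scalerAl KYK !scalerA mulrAC.
Qed.

Lemma contractor_invS s N n : contraction_rels s N -> (2 * n.+2 <= N)%N ->
  contractor_inv s n -> contractor_inv (shift1 s) n ->
  contractor_inv (shift1 (shift1 s)) n -> contractor_inv s n.+1.
Proof.
move=> rs hN inv inv1 [_ _ _ sand2].
have [CC _ _ _] := inv1; have far := sigma_far_comm rs.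
have sand := sandwich_ruleS rs hN inv inv1.
split=> //.
- have LL : k s (2 * n.+1).+1 * 1 * k s (2 * n.+1).+1 = eta *: k s (2 * n.+1).+1.
    by rewrite mulr1; apply: (kappa_sq_rel rs); lia.
  have := sand 1 eta (fun l _ => commr1 _) LL.
  by rewrite mulr1 mulVf ?bmw_eta_neq0 // scale1r.
- by rewrite contractorSS !mulrA CC.
- rewrite contractorSS; apply: absorb_step.
  + apply: comm_contractor => j hj.
    by apply/kappa_comm/far; lia.
  + by apply/kappa_comm/comm_kappa/far; lia.
  + by apply: (kappa_braid_rel rs); lia.
  + rewrite -[eta^-1]mulr1; apply: sand2 => [l hl|].
      by apply/comm_kappa/far; lia.
    by rewrite scale1r; apply: (kappa_braid_rel rs); lia.
Qed.

Lemma contractor_inv_holds n s N : contraction_rels s N ->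
  (2 * n.+1 <= N)%N -> contractor_inv s n.
Proof.
elim: n s N => [|n IH] s N rs hN; first by apply: contractor_inv0 rs _; lia.
have rs1 := contraction_rels_shift rs; have rs2 := contraction_rels_shift rs1.
by apply: (contractor_invS rs hN); [apply: (IH _ _ rs) | apply: (IH _ _ rs1) |
  apply: (IH _ _ rs2)]; lia.
Qed.

Lemma contractor_sandwich s N n : contraction_rels s N -> (2 * n.+1 <= N)%N ->
  c s n.+1 * s (2 * n.+1)%N * c s n.+1 = (eta^-1 * mu^-1) *: c s n.+1 /\
  c s n.+1 * k s (2 * n.+1)%N * c s n.+1 = eta^-1 *: c s n.+1.
Proof.
move=> rs hN; have [_ _ _ sand] := contractor_inv_holds rs hN.
have far := sigma_far_comm rs.
rewrite mulnS add2n; split.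
- apply: sand => [l hl|]; first by apply: far; lia.
  by apply: (kappa_sigma_rel rs); lia.
- rewrite -[eta^-1]mulr1; apply: sand => [l hl|]; first by apply/comm_kappa/far; lia.
  by rewrite scale1r; apply: (kappa_braid_rel rs); lia.
Qed.

End Contractors.

Theorem lemmaA2 (F : fieldType) (q mu : F)
  (hq0 : q != 0) (hq1 : q != 1) (hqm1 : q != -1)
  (hmu0 : mu != 0) (hmuq : mu != q) (hmuq' : mu != - q^-1)
  (m : nat) (A : algType F) (s t : nat -> A)
  (hrel : BMW_rels q mu m s t)
  (i : nat) (hi : (1 <= i)%N) (hm : (2 * i + 1 <= m)%N) :
  contractor q mu s i * s (2 * i)%N * contractor q mu s i
    = ((bmw_eta q mu)^-1 * mu^-1) *: contractor q mu s i /\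
  contractor q mu s i * kappa q mu s (2 * i)%N * contractor q mu s i
    = (bmw_eta q mu)^-1 *: contractor q mu s i.
Proof.
case: i hi hm => [//|n] _ hm.
apply: (contractor_sandwich hq0 hq1 hqm1 hmu0 hmuq hmuq' (N := m.-1)); last by lia.
exact: bmw_contraction_rels hrel.
Qed.
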